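(* Let $V_1,\dots,V_{15}$ be the orbits of $L$ on $V(G_{E_8})$. Let $i\neq j$, $k,s\in V_i$ and $l,t\in V_j$. If $d(k,l)=d(s,t)$, then there exists $\sigma\in L$ with $\sigma(k)=s$ and $\sigma(l)=t$.
   Context: The $E_8$ root system $\Psi_{E_8}\subset\mathbb{R}^8$ consists of the 240 vectors $\pm e_i\pm e_j$ ($1\le i<j\le 8$) and all $x\in\{\pm1\}^8$ with $\prod_i x_i=1$. $G_{E_8}$ is the graph with vertices $v_x$, $x\in\Psi_{E_8}$, where $v_x=v_{-x}$, and $v_x\sim v_y$ iff $\langle x,y\rangle=0$. Let $I=\mathrm{diag}(1,1)$, $X=\begin{pmatrix}0&1\\1&0\end{pmatrix}$, $Z=\mathrm{diag}(1,-1)$, $Y=XZ$. For $M=M_1\otimes M_2\otimes M_3$ with $M_i\in\{I,X,Y,Z\}$, $\sigma_M:v_x\mapsto v_{Mx}$ is an automorphism of $G_{E_8}$ and $L=\{\sigma_M\}\cong\mathbb{Z}_2^6$; $L$ has 15 orbits on $V(G_{E_8})$, each of size 8. $d(a,b)$ denotes the graph distance in $G_{E_8}$ (length of a shortest path). *)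

From mathcomp Require Import all_boot all_order all_algebra.
Set Implicit Arguments. Unset Strict Implicit. Unset Printing Implicit Defensive.
Import Order.TTheory GRing.Theory Num.Theory.
Local Open Scope ring_scope.

(* Vectors of R^8 with integer coordinates (all E8 roots in the paper's
   normalisation have coordinates in {-1,0,1}). *)
Definition vec := 'cV[int]_8.

Definition dot (x y : vec) : int := \sum_(i < 8) x i 0 * y i 0.

Definition is_E8_root (x : vec) : bool :=
  [exists i : 'I_8, exists j : 'I_8,
     [&& (i < j)%N, x i 0 ^+ 2 == 1, x j 0 ^+ 2 == 1 &
         [forall k : 'I_8, (k != i) && (k != j) ==> (x k 0 == 0)]]]
  || ([forall k : 'I_8, x k 0 ^+ 2 == 1] && (\prod_(k < 8) x k 0 == 1)).

(* Vertex v_x = v_{-x}: we represent the vertex by the canonical element of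
   {x, -x} whose first nonzero coordinate is positive. *)
Definition first_nz (x : vec) : int :=
  head 0 [seq c <- [seq x i 0 | i <- enum 'I_8] | c != 0].

Definition vert (x : vec) : vec := if first_nz x < 0 then - x else x.

Definition is_vertex (v : vec) : bool := is_E8_root v && (vert v == v).

Definition adj (u w : vec) : bool :=
  [&& is_vertex u, is_vertex w & dot u w == 0].

Definition gdist (a b : vec) (n : nat) : Prop :=
  (exists p : seq vec, [/\ path adj a p, last a p = b & size p = n])
  /\ (forall p : seq vec, path adj a p -> last a p = b -> (n <= size p)%N).

Definition Imx : 'M[int]_2 := \matrix_(i < 2, j < 2) ((i == j)%:R).
Definition Xmx : 'M[int]_2 := \matrix_(i < 2, j < 2) ((i != j)%:R).
Definition Zmx : 'M[int]_2 :=
  \matrix_(i < 2, j < 2) (if i == j then (if i == 0 :> nat then 1 else -1) else 0).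
Definition Ymx : 'M[int]_2 := Xmx *m Zmx.

Definition pauli (a : 'I_4) : 'M[int]_2 :=
  match val a with 0 => Imx | 1 => Xmx | 2 => Ymx | _ => Zmx end.

(* Bit k of an index of 'I_8 (standard Kronecker ordering i = 4a+2b+c). *)
Definition bit (k : nat) (i : 'I_8) : 'I_2 := inord ((i %/ 2 ^ k) %% 2).

Definition kron3 (A B C : 'M[int]_2) : 'M[int]_8 :=
  \matrix_(i < 8, j < 8)
    (A (bit 2 i) (bit 2 j) * B (bit 1 i) (bit 1 j) * C (bit 0 i) (bit 0 j)).

Definition Lmat (m : 'I_4 * 'I_4 * 'I_4) : 'M[int]_8 :=
  kron3 (pauli m.1.1) (pauli m.1.2) (pauli m.2).

Definition sigma (m : 'I_4 * 'I_4 * 'I_4) (v : vec) : vec := vert (Lmat m *m v).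

Definition same_orbit (u w : vec) : Prop := exists m, sigma m u = w.

(* Each sigma_M acts on the lines of E8 through a signed orthogonal matrix,
   and the Pauli matrices are closed under products up to sign; hence
   sigma_M sigma_N = sigma_MN, every sigma_M is an involution and every
   sigma_M preserves orthogonality.  Distinct vertices are at distance 1
   exactly when they are orthogonal, so the hypothesis says that <k,l> = 0
   iff <s,t> = 0.  Writing s = sigma_A k and t = sigma_B l and applying
   sigma_A, it remains to find an element of the stabiliser of k mapping l to
   sigma_A t, a point of the orbit of l with the same orthogonality to k as l.
   Transporting by one more sigma_M, k may be taken among 15 orbit
   representatives; for these, the transitivity of the stabiliser on each
   such class of every other orbit is a finite check on the 120 vertices. *)

From mathcomp Require Import all_boot all_order all_algebra mxtens.
From Stdlib Require Import PeanoNat.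
Set Implicit Arguments. Unset Strict Implicit. Unset Printing Implicit Defensive.
Import Order.TTheory GRing.Theory Num.Theory.
Local Open Scope ring_scope.

(** * Normal form of vertices *)

Lemma first_nzN v : first_nz (- v) = - first_nz v.
Proof.
rewrite /first_nz; under eq_map do rewrite mxE.
rewrite (map_comp -%R) filter_map.
rewrite (eq_in_filter (a1 := preim _ _) (a2 := predC1 0)) => [|c _]; last by rewrite /= oppr_eq0.
by case: filter => [|c s] /=; rewrite ?oppr0.
Qed.

Lemma first_nz_eq0 v : first_nz v = 0 -> v = 0.
Proof.
rewrite /first_nz; case E: filter => [|c s] /=; last first.
  by move=> c0; have := mem_head c s; rewrite -E mem_filter c0 eqxx.
move=> _; apply/matrixP => i j; rewrite (ord1 j) mxE; apply/eqP/negPn/negP => vi.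
have : v i 0 \in [seq x <- [seq v k 0 | k <- enum 'I_8] | x != 0].
  by rewrite mem_filter vi; apply/mapP; exists i; rewrite ?mem_enum.
by rewrite E.
Qed.

Lemma vertN v : vert (- v) = vert v.
Proof.
rewrite /vert first_nzN oppr_lt0 opprK.
by case: ltrgtP => // /esym/first_nz_eq0 ->; rewrite oppr0.
Qed.

Lemma vert_sign v : exists e : bool, vert v = (-1) ^+ e *: v.
Proof.
rewrite /vert; case: ifP => _.
  by exists true; rewrite expr1 scaleN1r.
by exists false; rewrite expr0 scale1r.
Qed.

Lemma vertZsign (e : bool) v : vert ((-1) ^+ e *: v) = vert v.
Proof. by case: e; rewrite ?scale1r // scaleN1r vertN. Qed.

Lemma vert_idem v : vert (vert v) = vert v.
Proof. by have [e ev] := vert_sign v; rewrite {1}ev vertZsign. Qed.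

Lemma vert_vertex v : is_vertex v -> vert v = v.
Proof. by case/andP => _ /eqP. Qed.

(** * Pauli matrices and their Kronecker products *)

Lemma tensmx11 (R : pzRingType) m n : (1 : 'M[R]_m) *t (1 : 'M[R]_n) = 1.
Proof.
apply/matrixP => i j; case: (mxtens_indexP i) => i1 i2; case: (mxtens_indexP j) => j1 j2.
by rewrite tensmxE !mxE (can_eq (@mxtens_indexK _ _)) xpair_eqE -natrM mulnb.
Qed.

Lemma bit_mxtens_unindex (i : 'I_8) :
  [/\ bit 2 i = (@mxtens_unindex 2 4 i).1,
      bit 1 i = (@mxtens_unindex 2 2 (@mxtens_unindex 2 4 i).2).1
    & bit 0 i = (@mxtens_unindex 2 2 (@mxtens_unindex 2 4 i).2).2].
Proof.
split; apply/val_inj; rewrite /= inordK ?ltn_pmod //;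
  by case: i => [[|[|[|[|[|[|[|[|]]]]]]]] ?].
Qed.

Lemma kron3_tens (A B C : 'M[int]_2) : kron3 A B C = A *t (B *t C).
Proof.
apply/matrixP => i j; rewrite !mxE -mulrA.
by have [-> -> ->] := bit_mxtens_unindex i; have [-> -> ->] := bit_mxtens_unindex j.
Qed.

Lemma kron3_mul (A B C A' B' C' : 'M[int]_2) :
  kron3 A B C *m kron3 A' B' C' = kron3 (A *m A') (B *m B') (C *m C').
Proof. by rewrite !kron3_tens (tensmx_mul A (B *t C) A' (B' *t C')) tensmx_mul. Qed.

Lemma kron3Z a b c (A B C : 'M[int]_2) :
  kron3 (a *: A) (b *: B) (c *: C) = (a * b * c) *: kron3 A B C.
Proof. by apply/matrixP => i j; rewrite !mxE -(mulrACA a) -(mulrACA (a * b)). Qed.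

Lemma kron3_tr (A B C : 'M[int]_2) : (kron3 A B C)^T = kron3 A^T B^T C^T.
Proof. by apply/matrixP => i j; rewrite !mxE. Qed.

Lemma kron3_1 : kron3 1 1 1 = 1.
Proof. by rewrite kron3_tens !tensmx11. Qed.

Definition pauli_entry (a x y : nat) : int :=
  match a, x, y with
  | 0, 0, 0 | 0, 1, 1 | 1, 0, 1 | 1, 1, 0 | 2, 1, 0 | 3, 0, 0 => 1%R
  | 2, 0, 1 | 3, 1, 1 => (-1)%R
  | _, _, _ => 0%R
  end%N.

Lemma pauliE a (x y : 'I_2) : pauli a x y = pauli_entry a x y.
Proof.
case: a => [[|[|[|[|//]]]] ?]; case: x => [[|[|//]] ?]; case: y => [[|[|//]] ?];
  by rewrite /pauli /Ymx ?mxE ?big_ord_recr ?big_ord0 /= ?mxE.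
Qed.

(* Coding I, X, Y, Z as 0, 1, 2, 3 turns products modulo sign into xor. *)
Definition pauli_mul_index (a b : 'I_4) : 'I_4 := inord (Nat.lxor a b).

Lemma pauli_mul a b :
  exists e : bool, pauli a *m pauli b = (-1) ^+ e *: pauli (pauli_mul_index a b).
Proof.
(* pauli a is X^x Z^z with x = [a \in {1, 2}], z = [a \in {2, 3}], and Z X = - X Z. *)
exists ((1 < a)%N && ((b == 1 :> nat) || (b == 2 :> nat))).
apply/matrixP => i j; rewrite !mxE !big_ord_recr big_ord0 /= !pauliE.
case: a b => [[|[|[|[|//]]]] ?] [[|[|[|[|//]]]] ?]; rewrite inordK //;
  by case: i j => [[|[|//]] ?] [[|[|//]] ?].
Qed.

Lemma pauli_mul_index_diag a : pauli_mul_index a a = ord0.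
Proof. by apply/val_inj; rewrite /pauli_mul_index Nat.lxor_nilpotent /= inordK. Qed.

Lemma pauli0 : pauli ord0 = 1.
Proof. by apply/matrixP => i j; rewrite !mxE. Qed.

Lemma tr_pauli a : exists e : bool, (pauli a)^T = (-1) ^+ e *: pauli a.
Proof.
exists (a == 2 :> nat); apply/matrixP => i j; rewrite !mxE !pauliE.
by case: a => [[|[|[|[|//]]]] ?]; case: i j => [[|[|//]] ?] [[|[|//]] ?].
Qed.

Definition Lmul (m m' : 'I_4 * 'I_4 * 'I_4) : 'I_4 * 'I_4 * 'I_4 :=
  (pauli_mul_index m.1.1 m'.1.1, pauli_mul_index m.1.2 m'.1.2,
   pauli_mul_index m.2 m'.2).

Lemma Lmat_mul m m' :
  exists e : bool, Lmat m *m Lmat m' = (-1) ^+ e *: Lmat (Lmul m m').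
Proof.
have [e1 E1] := pauli_mul m.1.1 m'.1.1; have [e2 E2] := pauli_mul m.1.2 m'.1.2.
have [e3 E3] := pauli_mul m.2 m'.2; exists (e1 (+) e2 (+) e3).
by rewrite /Lmat kron3_mul E1 E2 E3 kron3Z -!signr_addb.
Qed.

Lemma Lmat_sqr m : exists e : bool, Lmat m *m Lmat m = (-1) ^+ e *: 1.
Proof.
have [e ->] := Lmat_mul m m; exists e.
by rewrite /Lmul !pauli_mul_index_diag /Lmat /= pauli0 kron3_1.
Qed.

Lemma tr_Lmat m : exists e : bool, (Lmat m)^T = (-1) ^+ e *: Lmat m.
Proof.
have [e1 E1] := tr_pauli m.1.1; have [e2 E2] := tr_pauli m.1.2.
have [e3 E3] := tr_pauli m.2; exists (e1 (+) e2 (+) e3).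
by rewrite /Lmat kron3_tr E1 E2 E3 kron3Z -!signr_addb.
Qed.

(** * The action of L *)

Lemma sigma_vert m v : sigma m (vert v) = sigma m v.
Proof. by have [e ->] := vert_sign v; rewrite /sigma -scalemxAr vertZsign. Qed.

Lemma sigma_comp m m' v : sigma m (sigma m' v) = sigma (Lmul m m') v.
Proof.
rewrite [sigma m' v]/sigma sigma_vert /sigma mulmxA.
by have [e ->] := Lmat_mul m m'; rewrite -scalemxAl vertZsign.
Qed.

Lemma sigma_invol m v : sigma m (sigma m v) = vert v.
Proof.
rewrite [sigma m v]/sigma sigma_vert /sigma mulmxA.
by have [e ->] := Lmat_sqr m; rewrite -scalemxAl vertZsign mul1mx.
Qed.

Lemma dot_trmx u w : dot u w = (u^T *m w) 0 0.
Proof. by rewrite /dot mxE; apply: eq_bigr => i _; rewrite mxE. Qed.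

Lemma dot_Lmat_eq0 m u w : (dot (Lmat m *m u) (Lmat m *m w) == 0) = (dot u w == 0).
Proof.
have [e tE] := tr_Lmat m; have [e' sE] := Lmat_sqr m.
rewrite !dot_trmx trmx_mul tE mulmxA -(mulmxA u^T) -scalemxAl sE.
by rewrite -!scalemxAr mulmx1 -!scalemxAl !mxE !mulf_eq0 !signr_eq0.
Qed.

Lemma dot_vert_eq0 u w : (dot (vert u) (vert w) == 0) = (dot u w == 0).
Proof.
have [e ->] := vert_sign u; have [e' ->] := vert_sign w.
rewrite !dot_trmx -scalemxAr [(_ *: u)^T]linearZ /= -scalemxAl.
by rewrite !mxE !mulf_eq0 !signr_eq0.
Qed.

Lemma dot_sigma_eq0 m u w : (dot (sigma m u) (sigma m w) == 0) = (dot u w == 0).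
Proof. by rewrite /sigma dot_vert_eq0 dot_Lmat_eq0. Qed.

Lemma same_orbit_refl v : is_vertex v -> same_orbit v v.
Proof.
by exists (ord0, ord0, ord0); rewrite /sigma /Lmat /= pauli0 kron3_1 mul1mx vert_vertex.
Qed.

Lemma same_orbit_sym u w : is_vertex u -> same_orbit u w -> same_orbit w u.
Proof. by move=> vu [m <-]; exists m; rewrite sigma_invol vert_vertex. Qed.

Lemma same_orbit_trans u v w : same_orbit u v -> same_orbit v w -> same_orbit u w.
Proof. by move=> [m <-] [m' <-]; exists (Lmul m' m); rewrite sigma_comp. Qed.

Lemma adj_vertex u w : is_vertex u -> is_vertex w -> adj u w = (dot u w == 0).
Proof. by rewrite /adj => -> ->. Qed.

Lemma gdist_eq1 u w n : u != w -> gdist u w n -> (n == 1%N) = adj u w.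
Proof.
move=> uw [[p [pp lp sp]] minp]; apply/eqP/idP => [n1 | adj_uw].
  by move: pp lp; rewrite n1 in sp; case: p sp => [|x []] //= _ /andP [? _] <-.
have n_le1 : (n <= 1)%N by apply: (minp [:: w]) => //; rewrite /path adj_uw.
case: p pp lp sp n_le1 => [_ /= uw' | x p _ _ <-]; first by rewrite uw' eqxx in uw.
by case: p.
Qed.

(** * Computation on the 120 vertices *)

Lemma big_ord_foldr (R : Type) (idx : R) (op : R -> R -> R) n (F : nat -> R) :
  \big[op/idx]_(i < n) F i = foldr (fun i => op (F i)) idx (iota 0 n).
Proof. by rewrite -(big_mkord xpredT) unlock /index_iota subn0. Qed.

(* Computable counterparts, on coordinate lists, of the operations on [vec]:
   big operators and matrices do not reduce under [vm_compute]. *)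
Definition sumc (F : nat -> int) : int := foldr (fun i => +%R (F i)) 0 (iota 0 8).
Definition prodc (F : nat -> int) : int := foldr (fun i => *%R (F i)) 1 (iota 0 8).

Definition vec_of (c : seq int) : vec := \col_i c`_i.
Definition seq_of (v : vec) : seq int := [seq v i 0 | i <- enum 'I_8].

Lemma vec_ofE c i j : vec_of c i j = c`_i.
Proof. by rewrite mxE. Qed.

Lemma seq_ofK : cancel seq_of vec_of.
Proof.
move=> v; apply/matrixP => i j.
by rewrite (ord1 j) vec_ofE (nth_map ord0) ?size_enum_ord // nth_ord_enum.
Qed.

Lemma vec_ofK c : size c = 8%N -> seq_of (vec_of c) = c.
Proof.
move=> c8; apply: (@eq_from_nth _ 0); first by rewrite size_map size_enum_ord c8.
move=> i; rewrite size_map size_enum_ord => i8.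
by rewrite (nth_map ord0) ?size_enum_ord // vec_ofE nth_enum_ord.
Qed.

Definition bitn (k i : nat) : nat := (i %/ 2 ^ k) %% 2.

Definition L_entry (m : 'I_4 * 'I_4 * 'I_4) (i j : nat) : int :=
  pauli_entry m.1.1 (bitn 2 i) (bitn 2 j) * pauli_entry m.1.2 (bitn 1 i) (bitn 1 j)
  * pauli_entry m.2 (bitn 0 i) (bitn 0 j).

Definition mulc m (c : seq int) : seq int :=
  [seq sumc (fun j => L_entry m i j * c`_j) | i <- iota 0 8].

Definition first_nzc (c : seq int) : int :=
  head 0 [seq x <- [seq c`_i | i <- iota 0 8] | x != 0].

Definition vertc (c : seq int) : seq int := if first_nzc c < 0 then map -%R c else c.

Definition sigmac m (c : seq int) : seq int := vertc (mulc m c).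

Definition dotc (c d : seq int) : int := sumc (fun i => c`_i * d`_i).

Lemma LmatE m (i j : 'I_8) : Lmat m i j = L_entry m i j.
Proof. by rewrite mxE !pauliE /bit !inordK ?ltn_pmod. Qed.

Lemma mulmx_vec_of m c : Lmat m *m vec_of c = vec_of (mulc m c).
Proof.
apply/matrixP => i j; rewrite !mxE (nth_map 0%N) ?size_iota // nth_iota //.
under eq_bigr => k _ do rewrite LmatE vec_ofE.
by rewrite (@big_ord_foldr _ 0 +%R 8 (fun k => L_entry m i k * c`_k)).
Qed.

Lemma first_nz_vec_of c : first_nz (vec_of c) = first_nzc c.
Proof.
rewrite /first_nz /first_nzc -val_enum_ord -map_comp.
by congr (head _ (filter _ _)); apply: eq_map => i /=; rewrite vec_ofE.
Qed.

Lemma vert_vec_of c : vert (vec_of c) = vec_of (vertc c).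
Proof.
rewrite /vert /vertc first_nz_vec_of; case: ifP => // _.
apply/matrixP => i j; rewrite !mxE.
case: (ltnP i (size c)) => ic; first by rewrite (nth_map 0).
by rewrite (nth_default _ ic) nth_default ?size_map // oppr0.
Qed.

Lemma size_vertc c : size (vertc c) = size c.
Proof. by rewrite /vertc; case: ifP; rewrite ?size_map. Qed.

Lemma sigma_vec_of m c : sigma m (vec_of c) = vec_of (sigmac m c).
Proof. by rewrite /sigma mulmx_vec_of vert_vec_of. Qed.

Lemma dot_vec_of c d : dot (vec_of c) (vec_of d) = dotc c d.
Proof.
rewrite /dot; under eq_bigr => i _ do rewrite !vec_ofE.
by rewrite (@big_ord_foldr _ 0 +%R 8 (fun i => c`_i * d`_i)).
Qed.

Definition is_E8_rootc (c : seq int) : bool :=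
  has (fun i => has (fun j => [&& (i < j)%N, c`_i ^+ 2 == 1, c`_j ^+ 2 == 1 &
     all (fun k => (k != i) && (k != j) ==> (c`_k == 0)) (iota 0 8)]) (iota 0 8)) (iota 0 8)
  || all (fun k => c`_k ^+ 2 == 1) (iota 0 8) && (prodc (nth 0 c) == 1).

Lemma is_E8_root_vec_of c : is_E8_root (vec_of c) -> is_E8_rootc c.
Proof.
have iota8 (P : pred nat) : (forall k : 'I_8, P k) -> all P (iota 0 8).
  by move=> h; apply/allP => k; rewrite mem_iota => /= k8; exact: (h (Ordinal k8)).
case/orP => [/existsP [i /existsP [j]] | /andP [/forallP sq1 /eqP prod1]]; last first.
  apply/orP; right; apply/andP; split; first by apply: iota8 => k; rewrite -(vec_ofE c k 0).
  rewrite /prodc -(@big_ord_foldr _ 1 *%R 8 (nth 0 c)); apply/eqP.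
  by rewrite -[RHS]prod1; apply: eq_bigr => k _; rewrite vec_ofE.
case/and4P => ij; rewrite !vec_ofE => sqi sqj /forallP zero; apply/orP; left.
apply/hasP; exists (val i); first by rewrite mem_iota ltn_ord.
apply/hasP; exists (val j); first by rewrite mem_iota ltn_ord.
by rewrite ij sqi sqj; apply: iota8 => k; have := zero k; rewrite vec_ofE.
Qed.

Lemma E8_root_entry v i : is_E8_root v -> v i 0 \in [:: 0; 1; -1].
Proof.
have sq1 (x : int) : x ^+ 2 == 1 -> x \in [:: 0; 1; -1].
  by rewrite sqrf_eq1 !inE => ->; rewrite orbT.
case/orP => [/existsP [a /existsP [b /and4P [_ ha hb /forallP h0]]] | /andP [/forallP h _]].
  have [-> | ia] := eqVneq i a; first exact: sq1.
  have [-> | ib] := eqVneq i b; first exact: sq1.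
  by have := h0 i; rewrite ia ib /= => /eqP ->; rewrite mem_head.
exact: sq1.
Qed.

Fixpoint ternary_seqs (n : nat) : seq (seq int) :=
  if n is n'.+1 then [seq x :: s | x <- [:: 0; 1; -1], s <- ternary_seqs n'] else [:: [::]].

Lemma mem_ternary_seqs s : all (mem [:: 0; 1; -1]) s -> s \in ternary_seqs (size s).
Proof.
elim: s => [|x s IHs] /=; first by rewrite mem_seq1.
by case/andP => x3 /IHs s3; exact: (allpairs_f (fun x s => x :: s) x3 s3).
Qed.

Definition E8_vertices : seq (seq int) :=
  [seq c <- ternary_seqs 8 | (vertc c == c) && is_E8_rootc c].

Lemma seq_of_vertex v : is_vertex v -> seq_of v \in E8_vertices.
Proof.
case/andP => root /eqP vert_v; set c := seq_of v.
have size_c : size c = 8%N by rewrite size_map size_enum_ord.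
rewrite mem_filter -size_c mem_ternary_seqs ?andbT; last first.
  by apply/allP => x /mapP [i _ ->]; exact: E8_root_entry.
rewrite -[v]seq_ofK -/c in root vert_v; rewrite is_E8_root_vec_of // andbT.
by rewrite vert_vec_of in vert_v; rewrite -{2}(vec_ofK size_c) -vert_v vec_ofK ?size_vertc.
Qed.

(* [enum 'I_4] does not reduce under [vm_compute]. *)
Definition ord4_enum : seq 'I_4 :=
  [:: @Ordinal 4 0 isT; @Ordinal 4 1 isT; @Ordinal 4 2 isT; @Ordinal 4 3 isT].

Definition L_elements : seq ('I_4 * 'I_4 * 'I_4) :=
  [seq (ab, c) | ab <- [seq (a, b) | a <- ord4_enum, b <- ord4_enum], c <- ord4_enum].

Lemma mem_L_elements m : m \in L_elements.
Proof.
have mem4 (a : 'I_4) : a \in ord4_enum by case: a => [[|[|[|[|//]]]] ?].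
case: m => [[a b] c]; exact: (allpairs_f pair (allpairs_f pair (mem4 a) (mem4 b)) (mem4 c)).
Qed.

(* Vertices are handled through their indices in a list [V]; the action, the
   orbits and the orthogonality relation are tabulated, and the tables are
   passed as arguments so that [vm_compute] evaluates them only once. *)
Definition act_index (V : seq (seq int)) m (i : nat) : nat :=
  index (sigmac m (nth [::] V i)) V.

Definition table_closed (N : nat) (A : seq (seq nat)) : bool :=
  all (fun i => all (fun k => k < N)%N (nth [::] A i)) (iota 0 N).

Definition stabilizer_images (A : seq (seq nat)) (i j : nat) : seq nat :=
  [seq nth 0%N (nth [::] A j) q |
     q <- iota 0 (size L_elements) & nth 0%N (nth [::] A i) q == i].

Definition orth_class_within (Oi : seq bool) (j : nat) (S T : seq nat) : bool :=
  all (fun t => (nth false Oi t == nth false Oi j) ==> (t \in S)) T.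

Definition transitive_at (A Orb : seq (seq nat)) (O : seq (seq bool)) (i j : nat) : bool :=
  (j \in nth [::] Orb i) ||
  orth_class_within (nth [::] O i) j (stabilizer_images A i j) (nth [::] Orb j).

Definition orbit_reps (N : nat) (Orb : seq (seq nat)) : seq nat :=
  [seq i <- iota 0 N | all (leq i) (nth [::] Orb i)].

Definition reps_cover (N : nat) (Orb : seq (seq nat)) : bool :=
  all (fun j => has (mem (orbit_reps N Orb)) (nth [::] Orb j)) (iota 0 N).

Definition stabilizer_transitive_on (N : nat) (A Orb : seq (seq nat)) (O : seq (seq bool))
  : bool :=
  all (fun i => all (transitive_at A Orb O i) (iota 0 N)) (orbit_reps N Orb).

(* Abstracting the list and the tables also keeps the unifier from unfolding,
   and lazily evaluating, the concrete ones. *)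
Section StabilizerTables.

Variable V : seq (seq int).
Variables (A Orb : seq (seq nat)) (O : seq (seq bool)).
Hypothesis A_row : forall i, (i < size V)%N ->
  nth [::] A i = [seq act_index V m i | m <- L_elements].
Hypothesis Orb_row : forall i, (i < size V)%N -> nth [::] Orb i = undup (nth [::] A i).
Hypothesis O_entry : forall i j, (i < size V)%N -> (j < size V)%N ->
  nth false (nth [::] O i) j = (dotc (nth [::] V i) (nth [::] V j) == 0).
Hypothesis A_closed : table_closed (size V) A.
Hypothesis Orb_cover : reps_cover (size V) Orb.
Hypothesis A_transitive : stabilizer_transitive_on (size V) A Orb O.

Lemma act_index_lt m i : (i < size V)%N -> (act_index V m i < size V)%N.
Proof.
move=> iN; have i_in : i \in iota 0 (size V) by rewrite mem_iota.
have /allP := allP A_closed i i_in; rewrite A_row //; apply.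
exact: (map_f (fun m => act_index V m i) (mem_L_elements m)).
Qed.

Lemma sigmac_nth m i : (i < size V)%N ->
  sigmac m (nth [::] V i) = nth [::] V (act_index V m i).
Proof. by move=> iN; rewrite nth_index // -index_mem act_index_lt. Qed.

Lemma orbit_rep_seq c : c \in V ->
  exists m r, r \in orbit_reps (size V) Orb /\ sigmac m c = nth [::] V r.
Proof.
move=> cV; rewrite -(nth_index [::] cV); rewrite -index_mem in cV.
have := allP Orb_cover (index c V); rewrite mem_iota /= => /(_ cV) /hasP [r].
rewrite Orb_row // A_row // mem_undup => /mapP [m _ ->] r_rep.
by exists m, (act_index V m (index c V)); rewrite sigmac_nth.
Qed.

Lemma stabilizer_transitive_seq r d b :
  r \in orbit_reps (size V) Orb -> d \in V -> (forall m, sigmac m (nth [::] V r) != d) ->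
  (dotc (nth [::] V r) (sigmac b d) == 0) = (dotc (nth [::] V r) d == 0) ->
  exists n, sigmac n (nth [::] V r) = nth [::] V r /\ sigmac n d = sigmac b d.
Proof.
move=> r_rep dV; rewrite -(nth_index [::] dV); rewrite -index_mem in dV.
move: (index d V) dV => j jN c_d orth.
have rN : (r < size V)%N by move: r_rep; rewrite mem_filter mem_iota => /and3P [].
have := allP (allP A_transitive r r_rep) j; rewrite mem_iota /= => /(_ jN).
rewrite /transitive_at /orth_class_within !Orb_row // !A_row // mem_undup.
case/orP => [/mapP [m _ /= jr] | /allP/(_ (act_index V b j))].
  by have := c_d m; rewrite (sigmac_nth m rN) -jr eqxx.
rewrite mem_undup => /(_ (map_f (fun m => act_index V m j) (mem_L_elements b))).
rewrite !O_entry ?act_index_lt // -sigmac_nth // orth eqxx /stabilizer_images !A_row //.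
case/mapP => q; rewrite mem_filter mem_iota => /andP [fix_r /andP [_ qL]] tq.
rewrite !(nth_map (ord0, ord0, ord0) 0%N _ qL) in fix_r tq.
exists (nth (ord0, ord0, ord0) L_elements q).
by rewrite !sigmac_nth // tq (eqP fix_r).
Qed.

End StabilizerTables.

Definition act_table : seq (seq nat) :=
  [seq [seq act_index E8_vertices m i | m <- L_elements] | i <- iota 0 (size E8_vertices)].

Definition orbit_table : seq (seq nat) := map undup act_table.

Definition orth_table : seq (seq bool) :=
  [seq [seq dotc (nth [::] E8_vertices i) (nth [::] E8_vertices j) == 0
          | j <- iota 0 (size E8_vertices)] | i <- iota 0 (size E8_vertices)].

Lemma E8_tables :
  [&& table_closed (size E8_vertices) act_table,
      reps_cover (size E8_vertices) orbit_table &
      stabilizer_transitive_on (size E8_vertices) act_table orbit_table orth_table].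
Proof. by vm_compute. Qed.

Lemma act_table_closed : table_closed (size E8_vertices) act_table.
Proof. by case/and3P: E8_tables. Qed.

Lemma orbit_table_cover : reps_cover (size E8_vertices) orbit_table.
Proof. by case/and3P: E8_tables. Qed.

Lemma act_table_transitive :
  stabilizer_transitive_on (size E8_vertices) act_table orbit_table orth_table.
Proof. by case/and3P: E8_tables. Qed.

(* Rewrites are targeted and side conditions discharged explicitly: otherwise
   unification may unfold [E8_vertices] and evaluate it by lazy reduction. *)
Lemma nth_act_table i : (i < size E8_vertices)%N ->
  nth [::] act_table i = [seq act_index E8_vertices m i | m <- L_elements].
Proof.
move=> iN; have i_lt : (i < size (iota 0 (size E8_vertices)))%N by rewrite size_iota.
by rewrite [LHS](nth_map 0%N _ _ i_lt) nth_iota.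
Qed.

Lemma nth_orbit_table i : (i < size E8_vertices)%N ->
  nth [::] orbit_table i = undup (nth [::] act_table i).
Proof.
move=> iN; have i_lt : (i < size act_table)%N by rewrite size_map size_iota.
by rewrite [LHS](nth_map [::] _ _ i_lt).
Qed.

Lemma nth_orth_table i j : (i < size E8_vertices)%N -> (j < size E8_vertices)%N ->
  nth false (nth [::] orth_table i) j
  = (dotc (nth [::] E8_vertices i) (nth [::] E8_vertices j) == 0).
Proof.
move=> iN jN; have i_lt : (i < size (iota 0 (size E8_vertices)))%N by rewrite size_iota.
have j_lt : (j < size (iota 0 (size E8_vertices)))%N by rewrite size_iota.
rewrite [nth _ orth_table i](nth_map 0%N _ _ i_lt) nth_iota // add0n.
by rewrite (nth_map 0%N _ _ j_lt) nth_iota.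
Qed.

Lemma vertex_orbit_rep k : is_vertex k -> exists m r,
  r \in orbit_reps (size E8_vertices) orbit_table /\
  sigma m k = vec_of (nth [::] E8_vertices r).
Proof.
move=> /seq_of_vertex kV.
have [m [r [r_rep mk]]] := orbit_rep_seq nth_act_table nth_orbit_table act_table_closed
  orbit_table_cover kV.
exists m, r; split; first exact: r_rep.
by rewrite -[k]seq_ofK sigma_vec_of mk.
Qed.

Lemma stabilizer_transitive_rep r d t
    (k := vec_of (nth [::] E8_vertices r)) (l := vec_of d) :
  r \in orbit_reps (size E8_vertices) orbit_table -> d \in E8_vertices ->
  ~ same_orbit k l -> same_orbit l t ->
  (dot k t == 0) = (dot k l == 0) -> exists n, sigma n k = k /\ sigma n l = t.
Proof.
(* The membership hypothesis is consumed at once: [done] would try to evaluate it. *)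
move=> /(stabilizer_transitive_seq nth_act_table nth_orbit_table nth_orth_table
         act_table_closed act_table_transitive) transitive_r.
move=> /transitive_r {}transitive_r kl [b <-].
rewrite /k /l sigma_vec_of !dot_vec_of; case/transitive_r => [m | n [nk nl]].
  by apply/eqP => mkl; apply: kl; exists m; rewrite sigma_vec_of mkl.
by exists n; rewrite !sigma_vec_of nk nl.
Qed.

Lemma sigmac_E8_vertex m c : c \in E8_vertices -> sigmac m c \in E8_vertices.
Proof.
move=> cV; rewrite -(nth_index [::] cV); rewrite -index_mem in cV.
rewrite (sigmac_nth nth_act_table act_table_closed) // mem_nth //.
exact: (act_index_lt nth_act_table act_table_closed).
Qed.

Lemma stabilizer_transitive k l t :
  is_vertex k -> is_vertex l -> ~ same_orbit k l -> same_orbit l t ->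
  (dot k t == 0) = (dot k l == 0) -> exists n, sigma n k = k /\ sigma n l = t.
Proof.
move=> vk vl kl [b <-] orth.
have [m [r [/stabilizer_transitive_rep transitive_r mk]]] := vertex_orbit_rep vk.
have back v : is_vertex v -> same_orbit (sigma m v) v.
  by move=> vv; exists m; rewrite sigma_invol vert_vertex.
have [n [nk nl]] : exists n,
    sigma n (sigma m k) = sigma m k /\ sigma n (sigma m l) = sigma m (sigma b l).
  have := transitive_r _ (sigma m (sigma b l)) (sigmac_E8_vertex m (seq_of_vertex vl)).
  rewrite -mk -sigma_vec_of seq_ofK; apply.
  - move=> k0l; apply: kl; apply: (same_orbit_trans (v := sigma m k)); first by exists m.
    exact: same_orbit_trans k0l (back _ vl).
  - apply: same_orbit_trans (back _ vl) _.
    by apply: (same_orbit_trans (v := sigma b l)); [exists b | exists m].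
  - by rewrite !dot_sigma_eq0.
exists (Lmul m (Lmul n m)); rewrite -!sigma_comp nk nl !sigma_invol vert_vertex //.
split => //; exact: vert_idem.
Qed.

Theorem lemma3p6 (k s l t : vec) :
  is_vertex k -> is_vertex s -> is_vertex l -> is_vertex t ->
  same_orbit k s -> same_orbit l t -> ~ same_orbit k l ->
  (exists n : nat, gdist k l n /\ gdist s t n) ->
  exists m : 'I_4 * 'I_4 * 'I_4, sigma m k = s /\ sigma m l = t.
Proof.
move=> vk vs vl vt [a sa] [b tb] kl [n [dkl dst]]; subst s t.
have k_ne_l : k != l by apply: contra_notN kl => /eqP <-; exact: same_orbit_refl.
have s_ne_t : sigma a k != sigma b l.
  apply: contra_notN kl => /eqP st; apply: (same_orbit_trans (v := sigma a k)).
    by exists a.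
  by rewrite st; apply: same_orbit_sym => //; exists b.
have orth_st : (dot (sigma a k) (sigma b l) == 0) = (dot k l == 0).
  by rewrite -!adj_vertex // -(gdist_eq1 s_ne_t dst) (gdist_eq1 k_ne_l dkl).
have [m [mk ml]] : exists m, sigma m k = k /\ sigma m l = sigma a (sigma b l).
  apply: stabilizer_transitive => //; first by exists (Lmul a b); rewrite sigma_comp.
  by rewrite -[X in dot X _](vert_vertex vk) -(sigma_invol a) dot_sigma_eq0.
exists (Lmul a m); rewrite -!sigma_comp mk ml sigma_invol.
by split => //; exact: vert_idem.
Qed.
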